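(* Let $G$ be a perfectly labeled graph on $[n]$. If $G$ is crossing closed, then $NC_G$ is a supersolvable lattice.
   Context: Graphs are finite simple graphs with vertex set $[n]$; edges are written $ij$ with $i<j$. Two edges $a_1a_2$ and $b_1b_2$ cross if $a_1<b_1<a_2<b_2$ or $b_1<a_1<b_2<a_2$. $G$ is perfectly labeled if whenever $ik,jk\in E(G)$ with $i<j<k$, also $ij\in E(G)$. A bond of $G$ is a spanning subgraph (identified with its edge set) each of whose connected components is an induced subgraph of $G$; it is noncrossing if there are no two distinct components with vertex sets $B,B'$ and $a,c\in B$, $b,d\in B'$, $a<b<c<d$. $NC_G$ is the poset of noncrossing bonds ordered by inclusion of edge sets. Two crossing edges $e,f$ are crossing closed if among all induced connected subgraphs of $G$ containing $e$ and $f$ there is a unique minimal one under containment; $G$ is crossing closed if every pair of crossing edges is. A finite lattice is supersolvable if it has a maximal chain $\mathbf{m}$ such that for every chain $\mathbf{c}$, the sublattice generated by $\mathbf{m}$ and $\mathbf{c}$ is distributive. *)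

From mathcomp Require Import all_boot.
Set Implicit Arguments. Unset Strict Implicit. Unset Printing Implicit Defensive.

Section Lat.
Variables (T : finType) (le : rel T) (P : {set T}).

Definition is_meet (x y z : T) : Prop :=
  [/\ z \in P, le z x, le z y & forall w, w \in P -> le w x -> le w y -> le w z].
Definition is_join (x y z : T) : Prop :=
  [/\ z \in P, le x z, le y z & forall w, w \in P -> le x w -> le y w -> le z w].

Definition is_lattice : Prop :=
  forall x y, x \in P -> y \in P -> (exists z, is_meet x y z) /\ (exists z, is_join x y z).

Definition lat_closed (Q : {set T}) : Prop :=
  forall x y z, x \in Q -> y \in Q -> (is_meet x y z \/ is_join x y z) -> z \in Q.

Definition in_gen_sublattice (S : {set T}) (x : T) : Prop :=
  x \in P /\ forall Q : {set T}, S \subset Q -> Q \subset P -> lat_closed Q -> x \in Q.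

Definition distributive_on (L : T -> Prop) : Prop :=
  forall x y z a b c d e, L x -> L y -> L z ->
    is_join y z a -> is_meet x a b -> is_meet x y c -> is_meet x z d -> is_join c d e ->
    b = e.

Definition is_chain (C : {set T}) : Prop :=
  C \subset P /\ forall x y, x \in C -> y \in C -> le x y || le y x.

Definition is_maximal_chain (C : {set T}) : Prop :=
  is_chain C /\ forall C', is_chain C' -> C \subset C' -> C' = C.

Definition supersolvable_lattice : Prop :=
  is_lattice /\
  exists M : {set T}, is_maximal_chain M /\
    forall C : {set T}, is_chain C -> distributive_on (in_gen_sublattice (M :|: C)).
End Lat.

Section Graphs.
Variable n : nat.
Notation V := 'I_n.
Notation edges := {set V * V}.

Definition simple_graph (G : edges) : Prop := forall e, e \in G -> (e.1 < e.2)%N.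

Definition adj (B : edges) : rel V := fun u v => ((u, v) \in B) || ((v, u) \in B).

Definition perfectly_labeled (G : edges) : Prop :=
  forall i j k : V, (i < j)%N -> (j < k)%N -> (i, k) \in G -> (j, k) \in G -> (i, j) \in G.

(* B is a bond of G: B is a spanning subgraph whose components are induced subgraphs of G *)
Definition is_bond (G B : edges) : bool :=
  (B \subset G) &&
  [forall u : V, forall v : V,
     (connect (adj B) u v && ((u, v) \in G)) ==> ((u, v) \in B)].

Definition noncrossing (B : edges) : bool :=
  [forall a : V, forall b : V, forall c : V, forall d : V,
     [&& (a < b)%N, (b < c)%N, (c < d)%N, connect (adj B) a c & connect (adj B) b d]
       ==> connect (adj B) a b].

Definition NC (G : edges) : {set edges} := [set B | is_bond G B && noncrossing B].
Definition incl : rel edges := fun B1 B2 => B1 \subset B2.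

Definition edges_cross (e f : V * V) : bool :=
  [&& (e.1 < f.1)%N, (f.1 < e.2)%N & (e.2 < f.2)%N] ||
  [&& (f.1 < e.1)%N, (e.1 < f.2)%N & (f.2 < e.2)%N].

Definition induced_connected (G : edges) (W : {set V}) : Prop :=
  forall u v, u \in W -> v \in W ->
    connect (fun x y => [&& x \in W, y \in W & adj G x y]) u v.

Definition contains_edge (W : {set V}) (e : V * V) : bool := (e.1 \in W) && (e.2 \in W).

Definition icsub (G : edges) (e f : V * V) (W : {set V}) : Prop :=
  [/\ contains_edge W e, contains_edge W f & induced_connected G W].

Definition minimal_icsub G e f (W : {set V}) : Prop :=
  icsub G e f W /\ forall W', icsub G e f W' -> W' \subset W -> W' = W.

Definition crossing_closed_pair (G : edges) (e f : V * V) : Prop :=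
  exists W, minimal_icsub G e f W /\ forall W', minimal_icsub G e f W' -> W' = W.

Definition crossing_closed (G : edges) : Prop :=
  forall e f, e \in G -> f \in G -> edges_cross e f -> crossing_closed_pair G e f.
End Graphs.

From mathcomp Require Import all_boot zify.
Set Implicit Arguments. Unset Strict Implicit. Unset Printing Implicit Defensive.

(** The meet of two noncrossing bonds is their intersection: by crossing
closedness, the unique minimal connected induced subgraph containing two
crossing edges lies in every block containing both edges.  Joins then exist by
finiteness.  Perfect labelling makes the truncations [x_k] (the edges of [G]
on the vertices [0, ..., k-1]) noncrossing bonds, each covering the previous
one, so they form a maximal chain.

Given a chain [C], send each down-set [D] of the product of the chains
[{0, ..., n}] and [C + {G}] to the join [phi D] of the bonds [x_i :&: c] for
[(i, c)] in [D].  Intersections go to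
meets because a bond [x] of [NC_G] contained in a bond [y] equals [y] as soon
as every vertex with a smaller neighbour in [y] has one in [x], and for
[phi D] these vertices are read off [D]: [v] has a smaller neighbour in
[phi D] iff it has one in some [c] with [(i, c)] in [D] and [v < i].  So the
image of [phi] is a distributive sublattice containing [C] and the [x_k]. *)

Lemma connect_invariant (T : finType) (e : rel T) (P : T -> Prop) x y :
  (forall u v, P u -> e u v -> P v) -> P x -> connect e x y -> P y.
Proof.
move=> stepP + /connectP[p + ->]; elim: p x => [|z p IHp] x //= Px /andP[exz].
exact/IHp/stepP/exz.
Qed.

Lemma path_change (T : eqType) (e : rel T) (f : T -> bool) x p :
  path e x p -> f x != f (last x p) ->
  exists y z, [/\ y \in x :: p, z \in x :: p, e y z & f y != f z].
Proof.
elim: p x => [|z p IHp] x /=; first by rewrite eqxx.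
case/andP=> exz pz; have [fxz _|/negPn/eqP->] := boolP (f x != f z).
  by exists x, z; rewrite !inE !eqxx orbT.
case/(IHp _ pz)=> y [y' [py py' eyy' fyy']].
by exists y, y'; rewrite in_cons py in_cons py' !orbT.
Qed.

Lemma connect_delete_simplicial (T : finType) (e : rel T) s :
  (forall x y, e x s -> e s y -> x = y \/ e x y) ->
  forall a b, a != s -> b != s -> connect e a b ->
  connect [rel x y | [&& x != s, y != s & e x y]] a b.
Proof.
move=> simplicial a b as0 bs; set e' := [rel x y | _].
(* A walk may visit [s]; there we remember the vertex it came from. *)
pose P z := (z != s /\ connect e' a z) \/
  (z = s /\ exists2 y, y != s /\ connect e' a y & e y s).
have stepP u v : P u -> e u v -> P v.
  rewrite /P => -[[us au]|[-> [y yP eys]]] euv; have [vs|vs] := eqVneq v s; subst.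
  - by right; split=> //; exists u.
  - by left; split=> //; apply: connect_trans au (connect1 _); rewrite /= us vs.
  - by right; split=> //; exists y.
  case: yP => ys ay; left; split=> //; case: (simplicial _ _ eys euv) => [<- // | eyv].
  by apply: connect_trans ay (connect1 _); rewrite /= ys vs.
move=> ab; have [[] // | [/eqP]] :=
  connect_invariant stepP (or_introl (conj as0 (connect0 e' a))) ab.
by rewrite (negPf bs).
Qed.

Lemma between_xor_cross (x y s t : nat) : uniq [:: x; y; s; t] ->
  ((x < s) (+) (x < t)) != ((y < s) (+) (y < t)) ->
  [&& minn x y < minn s t, minn s t < maxn x y & maxn x y < maxn s t] ||
  [&& minn s t < minn x y, minn x y < maxn s t & maxn s t < maxn x y].
Proof.
rewrite /= !inE !negb_or => /and4P[/and3P[xy xs xt] /andP[ys yt] st _].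
by case: (ltnP x s); case: (ltnP y s); case: (ltnP x t); case: (ltnP y t) => //=; lia.
Qed.

Lemma chain_max (T : finType) (F : {set {set T}}) c0 : c0 \in F ->
  {in F &, forall c c' : {set T}, (c \subset c') || (c' \subset c)} ->
  exists2 c, c \in F & forall c', c' \in F -> c' \subset c.
Proof.
move=> c0F totF; have [c cF cmax] := arg_maxnP (fun c : {set T} => #|c|) c0F.
exists c => // c' c'F; case/orP: (totF _ _ cF c'F) => // cc'.
by have /eqP <- : c == c' by rewrite eqEcard cc' /=; apply: cmax.
Qed.

Section Lattices.
Variables (T : finType) (le : rel T) (P : {set T}).
Hypothesis le_anti : antisymmetric le.

Lemma is_meet_uniq x y z z' : is_meet le P x y z -> is_meet le P x y z' -> z = z'.
Proof. by case=> Pz zx zy zmax [Pz' z'x z'y z'max]; apply/le_anti; rewrite zmax ?z'max. Qed.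

Lemma is_join_uniq x y z z' : is_join le P x y z -> is_join le P x y z' -> z = z'.
Proof. by case=> Pz xz yz zmin [Pz' xz' yz' z'min]; apply/le_anti; rewrite zmin ?z'min. Qed.

End Lattices.

Lemma incl_anti n : antisymmetric (@incl n).
Proof. by move=> A B; rewrite -eqEsubset => /eqP. Qed.

Section Bonds.
Variable n : nat.
Local Notation V := 'I_n.
Local Notation edges := {set V * V}.
Implicit Types (B K : edges) (W : {set V}).

Lemma adjC B : symmetric (adj B).
Proof. by move=> x y; rewrite /adj orbC. Qed.

Lemma connect_adjC B : connect_sym (adj B).
Proof. exact/sym_connect_sym/adjC. Qed.

Lemma adjS B K : B \subset K -> subrel (adj B) (adj K).
Proof. by move=> /subsetP sBK x y; rewrite /adj => /orP[] /sBK ->; rewrite ?orbT. Qed.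

Lemma connect_adjS B K : B \subset K -> subrel (connect (adj B)) (connect (adj K)).
Proof. by move=> sBK; apply: connect_sub => x y /(adjS sBK)/connect1. Qed.

Lemma connect_adj_edge B e : e \in B -> connect (adj B) e.1 e.2.
Proof. by move=> eB; apply: connect1; rewrite /adj -surjective_pairing eB. Qed.

Lemma simple_adj_irrefl K : simple_graph K -> irreflexive (adj K).
Proof. by move=> sK x; apply/negbTE/negP => /orP[] /sK; rewrite ltnn. Qed.

Lemma simple_adj_edge K x y : simple_graph K -> adj K x y ->
  exists2 e, e \in K & [/\ val e.1 = minn x y, val e.2 = maxn x y & e.1 \in [:: x; y]].
Proof.
move=> sK /orP[] xyK; [exists (x, y) | exists (y, x)]; rewrite // !inE eqxx ?orbT;
  have /= := sK _ xyK; split=> //; lia.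
Qed.

Lemma noncrossing_of_crossing_connected K : simple_graph K ->
  (forall e f, e \in K -> f \in K -> edges_cross e f -> connect (adj K) e.1 f.1) ->
  noncrossing K.
Proof.
move=> sK crossK; apply/forallP=> a; apply/forallP=> b; apply/forallP=> c; apply/forallP=> d.
apply/implyP=> /and5P[ab bc cd /connectP[p pa c_p] /connectP[q qb dq]]; subst c.
apply/idPn=> nab.
have apart u v : connect (adj K) a u -> connect (adj K) b v -> ~~ connect (adj K) u v.
  move=> au bv; apply: contra nab => uv.
  by rewrite (connect_trans au (connect_trans uv _)) // connect_adjC.
have neq u v : connect (adj K) a u -> connect (adj K) b v -> u != v.
  by move=> au bv; apply: contraNneq _ (apart u v au bv) => ->; apply: connect0.
(* [side z] tells whether [z] lies between the ends of [p]; it changes along an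
   edge [st] of [q], and then [cut] changes along an edge [xy] of [p], so the
   edges [xy] and [st] cross. *)
pose side z := (a < z) (+) (last a p < z).
have [s [t [sq tq st side_st]]] :
    exists s t, [/\ s \in b :: q, t \in b :: q, adj K s t & side s != side t].
  apply: path_change qb _; rewrite -dq /side ab (ltn_trans ab (ltn_trans bc cd)) cd.
  by rewrite (leq_gtF (ltnW bc)).
pose cut z := (z < s) (+) (z < t).
have [x [y [xp yp xy cut_xy]]] :
    exists x y, [/\ x \in a :: p, y \in a :: p, adj K x y & cut x != cut y].
  apply: path_change pa _; move: side_st; rewrite /side /cut.
  by case: (a < s); case: (a < t); case: (last a p < s); case: (last a p < t).
have ax := path_connect pa xp; have ay := path_connect pa yp.
have bs := path_connect qb sq; have bt := path_connect qb tq.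
have xy_st : uniq [:: x : nat; y : nat; s : nat; t : nat].
  have irr u v : adj K u v -> u != v.
    by move=> uv; apply: contraTneq uv => ->; rewrite simple_adj_irrefl.
  rewrite (map_inj_uniq (@ord_inj n) [:: x; y; s; t]) /= !inE !negb_or.
  by rewrite (irr x y) // (irr s t) // !neq.
have [e eK [e1 e2 ex]] := simple_adj_edge sK xy.
have [f fK [f1 f2 fs]] := simple_adj_edge sK st.
have ae : connect (adj K) a e.1 by move: ex; rewrite !inE => /orP[] /eqP ->.
have bf : connect (adj K) b f.1 by move: fs; rewrite !inE => /orP[] /eqP ->.
move/negP: (apart _ _ ae bf); apply; apply: crossK => //.
by rewrite /edges_cross e1 e2 f1 f2; apply: between_xor_cross.
Qed.

Lemma eq_noncrossing B K : connect (adj B) =2 connect (adj K) ->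
  noncrossing B = noncrossing K.
Proof.
move=> BK; apply/eq_forallb=> a; apply/eq_forallb=> b; apply/eq_forallb=> c.
by apply/eq_forallb=> d; rewrite !BK.
Qed.

Lemma edges_cross_lt (e f : V * V) : edges_cross e f -> (e.1 < f.2) && (f.1 < e.2).
Proof. by case/orP=> /and3P[? ? ?]; apply/andP; split; lia. Qed.

Definition trunc B (t : nat) : edges := [set e in B | e.2 < t].

Lemma trunc_mono B : {homo trunc B : i j / i <= j >-> i \subset j}.
Proof.
by move=> i j ij; apply/subsetP=> e; rewrite !inE => /andP[-> /leq_trans]; apply.
Qed.

Definition block B (r : V) : {set V} := [set z | connect (adj B) r z].

Lemma block_connect B r u v : u \in block B r -> v \in block B r -> connect (adj B) u v.
Proof. by rewrite !inE => ru; apply: connect_trans; rewrite connect_adjC. Qed.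

End Bonds.

Section NoncrossingBondLattice.
Variables (n : nat) (G : {set 'I_n * 'I_n}).
Local Notation V := 'I_n.
Local Notation edges := {set V * V}.
Implicit Types (B K X Y : edges) (W : {set V}).
Hypothesis Gs : simple_graph G.
Hypothesis Gpl : perfectly_labeled G.

Definition induced W : rel V := fun x y => [&& x \in W, y \in W & adj G x y].

Definition closure K : edges := [set e in G | connect (adj K) e.1 e.2].

Lemma lower_neighbour_edge (x z : V) : adj G x z -> x < z -> (x, z) \in G.
Proof. by case/orP=> // /Gs /= zx xz; move: (ltn_trans zx xz); rewrite ltnn. Qed.

Lemma lower_neighbours_adj (x y z : V) : (x, z) \in G -> (y, z) \in G -> x != y -> adj G x y.
Proof.
move=> xz yz; rewrite -val_eqE neq_ltn /adj => /orP[xy|yx].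
  by rewrite (Gpl xy (Gs yz) xz yz).
by rewrite (Gpl yx (Gs xz) yz xz) orbT.
Qed.

(* The largest vertex of [W] is simplicial in [G[W]], so it can be deleted. *)
Lemma connect_induced_below W (t : nat) (u v : V) : u < t -> v < t ->
  connect (induced W) u v -> connect (induced [set x in W | x < t]) u v.
Proof.
move=> ut vt; elim: {W}#|W|.+1 {-2}W (ltnSn #|W|) => // k IHk W Wk uv.
have [/existsP[m0 /andP[m0W tm0]]|] := boolP [exists x in W, t <= x]; last first.
  move=> /existsPn Wt; congr (connect (induced _) u v) : uv; apply/setP => x.
  by rewrite inE; case xW: (x \in W); rewrite //= ltnNge; have := Wt x; rewrite xW.
have [m mW mmax] := arg_maxnP (fun x : V => val x) m0W.
have {}mW : m \in W := mW.
have {}mmax x : x \in W -> x <= m := mmax x.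
have tm : t <= m := leq_trans tm0 (mmax _ m0W).
have -> : [set x in W | x < t] = [set x in W :\ m | x < t].
  apply/setP => x; rewrite !inE; case: eqP => [-> | _] //=.
  by rewrite ltnNge tm andbF.
apply: IHk; first by rewrite (cardsD1 m W) mW add1n ltnS in Wk.
have simplicial x y : induced W x m -> induced W m y -> x = y \/ induced W x y.
  have below z : z \in W -> adj G z m -> (z, m) \in G.
    move=> zW zm; apply: lower_neighbour_edge => //; rewrite ltn_neqAle (mmax _ zW) andbT.
    by apply: contraTneq zm => /val_inj ->; rewrite simple_adj_irrefl.
  case/and3P=> xW _ xm /and3P[_ yW my]; have [-> | xy] := eqVneq x y; first by left.
  by right; rewrite /induced xW yW (lower_neighbours_adj (z := m)) // below // adjC.
have um : u != m by rewrite -val_eqE neq_ltn (leq_trans ut tm).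
have vm : v != m by rewrite -val_eqE neq_ltn (leq_trans vt tm).
rewrite -(eq_connect (e := [rel x y | [&& x != m, y != m & induced W x y]])).
  exact: connect_delete_simplicial.
by move=> x y; rewrite /= /induced !inE; case: (x != m); case: (y != m); rewrite ?andbF.
Qed.

Lemma bondP B : reflect
  (B \subset G /\ forall u v, connect (adj B) u v -> (u, v) \in G -> (u, v) \in B)
  (is_bond G B).
Proof.
apply: (iffP andP) => -[sBG bondB]; split=> //.
  by move=> u v uv uvG; move/forallP/(_ u)/forallP/(_ v): bondB; rewrite uv uvG.
by apply/forallP=> u; apply/forallP=> v; apply/implyP=> /andP[]; apply: bondB.
Qed.

Lemma NCP B : reflect [/\ B \subset G,
    forall u v, connect (adj B) u v -> (u, v) \in G -> (u, v) \in B & noncrossing B]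
  (B \in NC G).
Proof.
rewrite inE; apply: (iffP andP) => [[/bondP[]]|[sBG bondB]] //.
by split=> //; apply/bondP.
Qed.

Lemma NC_bond B : B \in NC G -> is_bond G B.
Proof. by rewrite inE => /andP[]. Qed.

Lemma NC_subG B : B \in NC G -> B \subset G.
Proof. by case/NCP. Qed.

Lemma NC_closed B u v : B \in NC G -> connect (adj B) u v -> (u, v) \in G -> (u, v) \in B.
Proof. by case/NCP=> _ + _; apply. Qed.

Lemma NC_crossing_connected B e f : B \in NC G -> e \in B -> f \in B -> edges_cross e f ->
  connect (adj B) e.1 f.1.
Proof.
case/NCP=> _ _ /forallP ncB eB fB /orP[] /and3P[ef1 fe2 ef2].
  move/forallP/(_ f.1)/forallP/(_ e.2)/forallP/(_ f.2)/implyP: (ncB e.1); apply.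
  by rewrite ef1 fe2 ef2 !connect_adj_edge.
rewrite connect_adjC.
move/forallP/(_ e.1)/forallP/(_ f.2)/forallP/(_ e.2)/implyP: (ncB f.1); apply.
by rewrite ef1 fe2 ef2 !connect_adj_edge.
Qed.

Lemma block_connect_induced B (u v : V) : B \subset G -> connect (adj B) u v ->
  connect (induced (block B u)) u v.
Proof.
move=> sBG uv; pose P z := z \in block B u /\ connect (induced (block B u)) u z.
suff [] : P v by [].
apply: (connect_invariant (P := P) _ _ uv); last by rewrite /P inE connect0.
move=> x y [xB ux] xy; have yB : y \in block B u.
  by rewrite inE (connect_trans _ (connect1 xy)) // -inE.
by split=> //; apply: connect_trans ux (connect1 _); rewrite /induced xB yB (adjS sBG).
Qed.

Lemma block_induced_connected B r : B \subset G -> induced_connected G (block B r).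
Proof.
move=> sBG u v; rewrite !inE => ru rv.
suff indC : connect_sym (induced (block B r)).
  have Bru := block_connect_induced sBG ru; have Brv := block_connect_induced sBG rv.
  by apply: connect_trans Brv; rewrite indC.
apply: sym_connect_sym => x y; rewrite /induced adjC.
by case: (x \in _); case: (y \in _).
Qed.

Lemma bond_connect_trunc B (u v : V) (t : nat) : is_bond G B ->
  connect (adj B) u v -> u < t -> v < t -> connect (adj (trunc B t)) u v.
Proof.
case/bondP=> sBG bondB uv ut vt.
have := connect_induced_below ut vt (block_connect_induced sBG uv).
apply: connect_sub => x y /and3P[]; rewrite !inE => /andP[ux xt] /andP[uy yt].
have xy : connect (adj B) x y by rewrite (connect_trans _ uy) // connect_adjC.
case/orP=> [xyG|yxG]; apply/connect1/orP; [left|right]; rewrite inE /= ?xt ?yt bondB //.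
by rewrite connect_adjC.
Qed.

Definition connected_cover (e f : V * V) : pred {set V} := fun W =>
  [&& contains_edge W e, contains_edge W f &
      [forall u in W, forall v in W, connect (induced W) u v]].

Lemma connected_coverP e f W : reflect (icsub G e f W) (connected_cover e f W).
Proof.
apply: (iffP and3P) => -[eW fW cW]; split=> //.
  by move=> u v uW vW; move/forall_inP/(_ u uW)/forall_inP/(_ v vW): cW.
by apply/forall_inP=> u uW; apply/forall_inP=> v vW; apply: cW.
Qed.

Hypothesis Gcc : crossing_closed G.

Lemma NC_full : G \in NC G.
Proof.
apply/NCP; split=> //; apply: noncrossing_of_crossing_connected => // e f eG fG ef.
have [W [[[/andP[e1W _] /andP[f1W _] conW] _] _]] := Gcc eG fG ef.
by apply: connect_sub (conW _ _ e1W f1W) => x y /and3P[_ _ /connect1].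
Qed.

Lemma NC_setI X Y : X \in NC G -> Y \in NC G -> X :&: Y \in NC G.
Proof.
move=> XNC YNC; have sXYG : X :&: Y \subset G by rewrite subIset // NC_subG.
apply/NCP; split=> //.
  move=> u v uv uvG; have uvX := connect_adjS (subsetIl X Y) uv.
  have uvY := connect_adjS (subsetIr X Y) uv.
  by rewrite inE (NC_closed XNC uvX uvG) (NC_closed YNC uvY uvG).
apply: noncrossing_of_crossing_connected => [e /(subsetP sXYG)/Gs // | e f].
rewrite !inE => /andP[eX eY] /andP[fX fY] ef.
have eG := subsetP (NC_subG XNC) e eX; have fG := subsetP (NC_subG XNC) f fX.
have [W0 [[[/andP[e1W0 _] /andP[f1W0 _] conW0] _] W0uniq]] := Gcc eG fG ef.
have W0_block Z : Z \in NC G -> e \in Z -> f \in Z -> W0 \subset block Z e.1.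
  move=> ZNC eZ fZ; have ef1 := NC_crossing_connected ZNC eZ fZ ef.
  have Zcov : connected_cover e f (block Z e.1).
    apply/connected_coverP; split; last exact/block_induced_connected/NC_subG.
      by rewrite /contains_edge !inE connect0 (connect_adj_edge eZ).
    by rewrite /contains_edge !inE ef1 (connect_trans ef1 (connect_adj_edge fZ)).
  have [W /minsetP[/connected_coverP Wcov Wmin] WZ] := minset_exists Zcov.
  by rewrite -(W0uniq W) //; split=> // W' /connected_coverP; apply: Wmin.
have inXY u v : u \in W0 -> v \in W0 -> (u, v) \in G -> (u, v) \in X :&: Y.
  move=> uW vW uvG; have inZ Z : Z \in NC G -> e \in Z -> f \in Z -> (u, v) \in Z.
    move=> ZNC eZ fZ; have /subsetP W0Z := W0_block Z ZNC eZ fZ.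
    exact: NC_closed ZNC (block_connect (W0Z _ uW) (W0Z _ vW)) uvG.
  by rewrite inE (inZ X) ?(inZ Y).
apply: connect_sub (conW0 _ _ e1W0 f1W0) => x y /and3P[xW yW /orP[xyG|yxG]].
  by apply/connect1/orP; left; apply: inXY.
by apply/connect1/orP; right; apply: inXY.
Qed.

Lemma NC_meet X Y : X \in NC G -> Y \in NC G -> is_meet (@incl n) (NC G) X Y (X :&: Y).
Proof.
move=> XNC YNC; split; rewrite /incl ?NC_setI ?subsetIl ?subsetIr //.
by move=> Z _ ZX ZY; rewrite subsetI ZX.
Qed.

Lemma subset_closure K : K \subset G -> K \subset closure K.
Proof. by move=> sKG; apply/subsetP=> e eK; rewrite inE (subsetP sKG) ?connect_adj_edge. Qed.

Lemma connect_closure K : K \subset G -> connect (adj (closure K)) =2 connect (adj K).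
Proof.
move=> sKG x y; apply/idP/idP; last first.
  exact/connect_adjS/subset_closure.
apply: connect_sub => u v; rewrite /adj !inE /= => /orP[] /andP[_ ?] //.
by rewrite connect_adjC.
Qed.

Lemma closure_NC K : K \subset G ->
  (forall e f, e \in K -> f \in K -> edges_cross e f -> connect (adj K) e.1 f.1) ->
  closure K \in NC G.
Proof.
move=> sKG crossK; apply/NCP; split.
- by apply/subsetP=> e; rewrite inE => /andP[].
- by move=> u v; rewrite connect_closure // => uv uvG; rewrite inE uvG.
rewrite (eq_noncrossing (connect_closure sKG)).
by apply: noncrossing_of_crossing_connected => // e /(subsetP sKG)/Gs.
Qed.

Lemma trunc_subG t : trunc G t \subset G.
Proof. by apply/subsetP=> e; rewrite inE => /andP[]. Qed.

Lemma crossing_connected_trunc e f t : e \in G -> f \in G -> edges_cross e f ->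
  (e.2 < t) || (f.2 < t) -> connect (adj (trunc G t)) e.1 f.1.
Proof.
move=> eG fG ef low; have /andP[ef2 fe2] := edges_cross_lt ef.
have [e12 f12] := (Gs eG, Gs fG).
apply: bond_connect_trunc (NC_crossing_connected NC_full eG fG ef) _ _.
- exact: NC_bond NC_full.
- by case/orP: low => t2; [apply: ltn_trans e12 t2 | apply: ltn_trans ef2 t2].
- by case/orP: low => t2; [apply: ltn_trans fe2 t2 | apply: ltn_trans f12 t2].
Qed.

Lemma trunc_NC t : trunc G t \in NC G.
Proof.
have adj_lt x y : adj (trunc G t) x y -> y < t.
  by case/orP; rewrite inE => /andP[// /Gs /= yx xt]; apply: ltn_trans yx xt.
apply/NCP; split; first exact: trunc_subG.
  move=> u v uv uvG; rewrite inE uvG /=.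
  have [vu | //] : v = u \/ v < t.
    apply: (connect_invariant (P := fun z => z = u \/ z < t) _ (or_introl erefl) uv).
    by move=> x y _ /adj_lt; right.
  by have := Gs uvG; rewrite /= vu ltnn.
apply: noncrossing_of_crossing_connected => [e /(subsetP (trunc_subG t))/Gs // | e f].
rewrite !inE => /andP[eG et] /andP[fG ft] ef.
by apply: crossing_connected_trunc; rewrite ?et.
Qed.

Lemma closure_trunc_NC c t : c \in NC G -> closure (c :|: trunc G t) \in NC G.
Proof.
move=> cNC; have sKG : c :|: trunc G t \subset G by rewrite subUset NC_subG ?trunc_subG.
apply: closure_NC => // e f eK fK ef.
have [eG fG] := (subsetP sKG e eK, subsetP sKG f fK).
have [/andP[ec fc] | ] := boolP ((e \in c) && (f \in c)).
  exact: connect_adjS (subsetUl _ _) _ _ (NC_crossing_connected cNC ec fc ef).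
move=> notc; apply: connect_adjS (subsetUr _ _) _ _ (crossing_connected_trunc eG fG ef _).
move: eK fK notc; rewrite !inE eG fG /=.
by case: (e \in c) (f \in c) => [] [] //= => [_ -> | -> _ | ->] //; rewrite orbT.
Qed.

Definition ncjoin (F : {set edges}) : edges :=
  G :&: \bigcap_(Z | (Z \in NC G) && [forall g in F, g \subset Z]) Z.

Lemma ncjoin_NC (F : {set edges}) : ncjoin F \in NC G.
Proof.
apply: (big_rec (fun X => G :&: X \in NC G)); first by rewrite setIT NC_full.
move=> Z X /andP[ZNC _] GX; rewrite setICA.
exact: NC_setI.
Qed.

Lemma ncjoin_ub (F : {set edges}) (g : edges) : g \in F -> g \subset G -> g \subset ncjoin F.
Proof.
move=> gF gG; rewrite subsetI gG; apply/bigcapsP=> Z /andP[_ /forall_inP]; exact.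
Qed.

Lemma ncjoin_least (F : {set edges}) (Z : edges) : Z \in NC G ->
  {in F, forall g : edges, g \subset Z} -> ncjoin F \subset Z.
Proof.
move=> ZNC FZ; apply: subset_trans (subsetIr _ _) (bigcap_inf _ _).
by rewrite ZNC; apply/forall_inP.
Qed.

Lemma NC_join X Y : X \in NC G -> Y \in NC G ->
  is_join (@incl n) (NC G) X Y (ncjoin [set X; Y]).
Proof.
move=> XNC YNC; split; first exact: ncjoin_NC.
- by apply: ncjoin_ub (NC_subG XNC); rewrite !inE eqxx.
- by apply: ncjoin_ub (NC_subG YNC); rewrite !inE eqxx orbT.
by move=> Z ZNC XZ YZ; apply: ncjoin_least => // g; rewrite !inE => /orP[] /eqP->.
Qed.

Lemma NC_lattice : is_lattice (@incl n) (NC G).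
Proof.
move=> X Y XNC YNC; split; first by exists (X :&: Y); apply: NC_meet.
by exists (ncjoin [set X; Y]); apply: NC_join.
Qed.

Lemma NC_lower_neighbour B (x w z : V) : B \in NC G -> trunc G z \subset B ->
  (x, z) \in B -> (w, z) \in G -> (w, z) \in B.
Proof.
move=> BNC zB xzB wzG; apply: (NC_closed BNC _ wzG).
have [<- | xw] := eqVneq x w; first exact: connect_adj_edge xzB.
apply: connect_trans (connect_adj_edge xzB); rewrite connect_adjC.
have xzG := subsetP (NC_subG BNC) _ xzB.
apply/connect1/(adjS zB); have /orP[] := lower_neighbours_adj xzG wzG xw => xwG.
  by rewrite /adj inE xwG (Gs wzG).
by rewrite /adj !inE xwG (Gs xzG) orbT.
Qed.

Lemma trunc_cover k y : y \in NC G -> trunc G k \subset y -> y \subset trunc G k.+1 ->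
  y = trunc G k \/ y = trunc G k.+1.
Proof.
move=> yNC ky yk1; have [yk | /subsetPn[e ey ek]] := boolP (y \subset trunc G k).
  by left; apply/eqP; rewrite eqEsubset yk.
right; apply/eqP; rewrite eqEsubset yk1; apply/subsetP=> f; rewrite inE => /andP[fG].
have e2 : e.2 = k :> nat.
  move: (subsetP yk1 e ey) ek; rewrite !inE (subsetP (NC_subG yNC) e ey) /= ltnS -leqNgt.
  by move=> ek1 ke; apply/eqP; rewrite eqn_leq ek1.
rewrite ltnS leq_eqVlt => /orP[/eqP f2 | fk]; last by apply: (subsetP ky); rewrite inE fG.
have {}f2 : f.2 = e.2 by apply: ord_inj; rewrite f2 e2.
rewrite [f]surjective_pairing f2; apply: (NC_lower_neighbour (x := e.1) yNC).
- by rewrite e2.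
- by rewrite -surjective_pairing.
by rewrite -f2 -surjective_pairing.
Qed.

Definition truncs : {set edges} := [set trunc G i | i : 'I_n.+1].

Lemma truncs_chain : is_chain (@incl n) (NC G) truncs.
Proof.
split; first by apply/subsetP=> _ /imsetP[i _ ->]; apply: trunc_NC.
move=> _ _ /imsetP[i _ ->] /imsetP[j _ ->]; rewrite /incl.
by case: (leqP i j) => [ij | /ltnW ji]; rewrite ?(trunc_mono G ij) ?(trunc_mono G ji) ?orbT.
Qed.

Lemma trunc0 : trunc G 0 = set0.
Proof. by apply/setP=> e; rewrite !inE ltn0 andbF. Qed.

Lemma trunc_full : trunc G n = G.
Proof. by apply/setP=> e; rewrite !inE ltn_ord andbT. Qed.

Lemma truncs_maximal : is_maximal_chain (@incl n) (NC G) truncs.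
Proof.
split=> [|C [/subsetP CNC totC] /subsetP truncsC]; first exact: truncs_chain.
apply/eqP; rewrite eqEsubset; apply/andP; split; last exact/subsetP.
have truncC i : i <= n -> trunc G i \in C.
  by move=> ilen; apply/truncsC/imsetP; exists (inord i); rewrite ?inordK.
apply/subsetP=> y yC; have yNC := CNC y yC.
have y_full : exists k, y \subset trunc G k by exists n; rewrite trunc_full NC_subG.
have [k yk kmin] := ex_minnP y_full.
have kn : k <= n by apply: kmin; rewrite trunc_full NC_subG.
case: k => [|k] in yk kmin kn *.
  apply/imsetP; exists ord0 => //; apply/eqP.
  by rewrite eqEsubset yk trunc0 sub0set.
have ky : trunc G k \subset y.
  by case/orP: (totC _ _ (truncC k (ltnW kn)) yC) => // /kmin; rewrite ltnn.
by case: (trunc_cover yNC ky yk) => ->; apply/imsetP; [exists (inord k) | exists (inord k.+1)];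
  rewrite ?inordK ?orbF //; apply: leq_trans kn.
Qed.

Definition nonmin B : {set V} := [set v | [exists w, (w, v) \in B]].

Lemma nonmin_mono : {homo nonmin : B K / B \subset K}.
Proof.
move=> B K /subsetP BK; apply/subsetP=> v; rewrite !inE => /existsP[w /BK wvK].
by apply/existsP; exists w.
Qed.

Lemma bond_nonmin B (v w : V) : is_bond G B -> connect (adj B) v w -> w < v ->
  v \in nonmin B.
Proof.
move=> bondB vw wv; have /bondP[sBG _] := bondB.
have /connectP[[|y p] /=] := bond_connect_trunc bondB vw (ltnSn v) (ltnW wv).
  by move=> _ wv'; rewrite -wv' ltnn in wv.
case/andP=> + _ _; rewrite inE; case/orP; rewrite !inE /= => /andP[yvB yv].
  by have := Gs (subsetP sBG _ yvB); rewrite /= ltnNge -ltnS yv.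
by apply/existsP; exists y.
Qed.

(* [#|nonmin B|] is the rank of [B]: by [bond_nonmin], the minimum is the only
   vertex of a block without a smaller neighbour. *)
Lemma bond_eq_of_nonmin X Y : is_bond G X -> is_bond G Y -> X \subset Y ->
  nonmin Y \subset nonmin X -> X = Y.
Proof.
move=> /bondP[sXG bondX] bY XY nmYX; have /bondP[sYG _] := bY.
apply/eqP; rewrite eqEsubset XY /=; apply/subsetP=> e0 e0Y; apply/negPn/negP=> e0X.
have e0YX : e0 \in Y :\: X by rewrite inE e0Y e0X.
have [e /setDP[eY eX] emin] := arg_minnP (fun e : V * V => e.2 : nat) e0YX.
have : e.2 \in nonmin X.
  apply: (subsetP nmYX); rewrite inE; apply/existsP.
  by exists e.1; rewrite -surjective_pairing.
rewrite inE => /existsP[w wX].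
have wY := subsetP XY _ wX.
have [e12 we2] := (Gs (subsetP sYG _ eY), Gs (subsetP sXG _ wX)).
have e1w : connect (adj Y) e.1 w.
  by apply: connect_trans (connect_adj_edge eY) _; rewrite connect_adjC (connect_adj_edge wY).
have truncX : trunc Y e.2 \subset X.
  apply/subsetP=> f; rewrite inE => /andP[fY fe]; apply/negPn/negP=> fX.
  have fYX : f \in Y :\: X by rewrite inE fX fY.
  by have := emin f fYX; rewrite leqNgt fe.
have e1wX := connect_adjS truncX (bond_connect_trunc bY e1w e12 we2).
move: eX; rewrite [e]surjective_pairing bondX ?(connect_trans e1wX (connect_adj_edge wX)) //.
by rewrite -surjective_pairing (subsetP sYG).
Qed.

Lemma nonmin_closure_trunc c (v : V) : c \in NC G -> v \notin nonmin c ->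
  v \notin nonmin (closure (c :|: trunc G v)).
Proof.
move=> cNC vc; apply/negP; rewrite inE => /existsP[w]; rewrite inE /= => /andP[wvG].
rewrite connect_adjC => vw; have wv := Gs wvG.
have above y : connect (adj c) v y -> v <= y.
  by move=> vy; rewrite leqNgt; apply: contra vc; apply: bond_nonmin (NC_bond cNC) vy.
pose P z := connect (adj c) v z /\ v <= z.
suff [_] : P w by rewrite leqNgt wv.
apply: (connect_invariant (P := P) _ (conj (connect0 _ v) (leqnn v)) vw).
move=> x y [vx vx'] /orP[]; rewrite !inE => /orP[xyc | /andP[xyG /= yv]].
- have vy : connect (adj c) v y by apply: connect_trans vx (connect1 _); rewrite /adj xyc.
  by split=> //; apply: above.
- by have := leq_ltn_trans vx' (Gs xyG); rewrite /= ltnNge (ltnW yv).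
- have vy : connect (adj c) v y by apply: connect_trans vx (connect1 _); rewrite /adj xyc orbT.
  by split=> //; apply: above.
- by move: yv; rewrite ltnNge vx'.
Qed.

Section ChainSublattice.
Variable C : {set edges}.
Hypothesis chainC : is_chain (@incl n) (NC G) C.

(* [G] is added so that every truncation is a value of [phi]. *)
Definition Cfull : {set edges} := G |: C.

Lemma Cfull_NC c : c \in Cfull -> c \in NC G.
Proof.
by case: chainC => /subsetP CNC _; rewrite in_setU1 => /orP[/eqP-> | /CNC //]; apply: NC_full.
Qed.

Lemma Cfull_total : {in Cfull &, forall c c' : edges, (c \subset c') || (c' \subset c)}.
Proof.
case: chainC => /subsetP CNC totC c c'; rewrite !in_setU1.
case/orP=> [/eqP-> | cC] /orP[/eqP-> | c'C]; first by rewrite subxx.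
- by rewrite (NC_subG (CNC _ c'C)) orbT.
- by rewrite (NC_subG (CNC _ cC)).
exact: totC.
Qed.

Definition point := ('I_n.+1 * edges)%type.
Implicit Types (D : {set point}) (p q : point).

Definition is_down (D : {set point}) : bool :=
  [forall p in D, (p.2 \in Cfull) &&
     [forall q : point, [&& q.1 <= p.1, q.2 \in Cfull & q.2 \subset p.2] ==> (q \in D)]].

Lemma is_downP D : reflect (forall p, p \in D -> p.2 \in Cfull /\
    forall q : point, q.1 <= p.1 -> q.2 \in Cfull -> q.2 \subset p.2 -> q \in D)
  (is_down D).
Proof.
apply: (iffP forall_inP) => downD p /downD.
  by case/andP=> pC /forallP qD; split=> // q q1 qC q2; apply: (implyP (qD q)); rewrite q1 qC.
case=> pC qD; rewrite pC; apply/forallP=> q; apply/implyP=> /and3P[q1 qC q2].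
exact: qD.
Qed.

Lemma is_downI D1 D2 : is_down D1 -> is_down D2 -> is_down (D1 :&: D2).
Proof.
move=> /is_downP d1 /is_downP d2; apply/is_downP=> p; rewrite inE.
case/andP=> /d1[pC qD1] /d2[_ qD2]; split=> // q q1 qC q2.
by rewrite inE qD1 ?qD2.
Qed.

Lemma is_downU D1 D2 : is_down D1 -> is_down D2 -> is_down (D1 :|: D2).
Proof.
move=> /is_downP d1 /is_downP d2; apply/is_downP=> p; rewrite inE.
by case/orP=> [/d1 | /d2] [pC qD]; split=> // q q1 qC q2; rewrite inE qD ?orbT.
Qed.

Definition gen (p : point) : edges := trunc G p.1 :&: p.2.

Definition phi (D : {set point}) : edges := ncjoin (gen @: D).

Lemma phi_NC D : phi D \in NC G.
Proof. exact: ncjoin_NC. Qed.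

Lemma gen_sub_phi D p : p \in D -> gen p \subset phi D.
Proof.
move=> pD; apply: ncjoin_ub; first exact: imset_f.
exact: subset_trans (subsetIl _ _) (trunc_subG _).
Qed.

Lemma phi_least D Z : Z \in NC G -> (forall p, p \in D -> gen p \subset Z) -> phi D \subset Z.
Proof. by move=> ZNC DZ; apply: ncjoin_least => // _ /imsetP[p pD ->]; apply: DZ. Qed.

Lemma phi_mono D1 D2 : D1 \subset D2 -> phi D1 \subset phi D2.
Proof. by move=> /subsetP D12; apply: phi_least (phi_NC _) _ => p /D12/gen_sub_phi. Qed.

Lemma phi_setU D1 D2 : is_join (@incl n) (NC G) (phi D1) (phi D2) (phi (D1 :|: D2)).
Proof.
split; rewrite /incl ?phi_NC ?phi_mono ?subsetUl ?subsetUr //.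
move=> Z ZNC D1Z D2Z; apply: phi_least => // p; rewrite inE => /orP[] pD.
  exact: subset_trans (gen_sub_phi pD) D1Z.
exact: subset_trans (gen_sub_phi pD) D2Z.
Qed.

Definition nonmin_down D : {set V} :=
  [set v : V | [exists p in D, (v < p.1) && (v \in nonmin p.2)]].

Lemma nonmin_phi D : is_down D -> nonmin (phi D) = nonmin_down D.
Proof.
move=> /is_downP downD; apply/setP=> v; apply/idP/idP; last first.
  rewrite !inE => /exists_inP[p pD /andP[vp]]; rewrite inE => /existsP[w wv].
  apply/existsP; exists w; apply: (subsetP (gen_sub_phi pD)).
  by rewrite !inE wv /= vp (subsetP (NC_subG (Cfull_NC (downD p pD).1)) _ wv).
rewrite inE => /existsP[w wv_phi]; apply/negPn/negP=> vD.
have [/exists_inP[p0 p0D vp0] | /exists_inPn lowD] := boolP [exists p in D, v < p.1];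
  last first.
  suff /subsetP/(_ _ wv_phi) : phi D \subset trunc G v by rewrite inE ltnn andbF.
  apply: phi_least (trunc_NC v) _ => p pD; apply: subset_trans (subsetIl _ _) (trunc_mono _ _).
  by rewrite leqNgt lowD.
(* For [p] in [D] with [v < p.1] and [p.2] largest, [phi D] lies in the closure
   of [p.2] and the edges below [v], where [v] has no smaller neighbour. *)
pose F := [set p.2 | p in D & v < p.1].
have p0F : p0.2 \in F by apply: imset_f; rewrite inE p0D.
have totF : {in F &, forall c c' : edges, (c \subset c') || (c' \subset c)}.
  move=> _ _ /imsetP[p + ->] /imsetP[q + ->]; rewrite !inE.
  by move=> /andP[/downD[pC _] _] /andP[/downD[qC _] _]; apply: Cfull_total.
have [_ /imsetP[p + ->] pmax] := chain_max p0F totF; rewrite inE => /andP[pD vp].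
have pNC := Cfull_NC (downD p pD).1.
have vp2 : v \notin nonmin p.2.
  by apply: contra vD => vp2; rewrite inE; apply/exists_inP; exists p; rewrite ?vp.
suff /nonmin_mono/subsetP phi_cl : phi D \subset closure (p.2 :|: trunc G v).
  move/negP: (nonmin_closure_trunc pNC vp2); apply; apply: phi_cl.
  by rewrite inE; apply/existsP; exists w.
apply: phi_least (closure_trunc_NC v pNC) _ => q qD.
apply: subset_trans (subset_closure _); last by rewrite subUset NC_subG ?trunc_subG.
have [qv | vq] := leqP q.1 v.
  by apply: subset_trans (subsetIl _ _) (subset_trans (trunc_mono _ qv) (subsetUr _ _)).
apply: subset_trans (subsetIr _ _) (subset_trans (pmax _ _) (subsetUl _ _)).
by apply: imset_f; rewrite inE qD.
Qed.

Lemma nonmin_downI D1 D2 : is_down D1 -> is_down D2 ->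
  nonmin_down D1 :&: nonmin_down D2 \subset nonmin_down (D1 :&: D2).
Proof.
move=> /is_downP down1 /is_downP down2; apply/subsetP=> v; rewrite !inE.
case/andP=> /exists_inP[p1 p1D /andP[vp1 vc1]] /exists_inP[p2 p2D /andP[vp2 vc2]].
have [[c1C D1cl] [c2C D2cl]] := (down1 p1 p1D, down2 p2 p2D).
have vn : v.+1 < n.+1 by rewrite ltnS.
have common c : c \in Cfull -> c \subset p1.2 -> c \subset p2.2 -> v \in nonmin c ->
    [exists p in D1 :&: D2, (v < p.1) && (v \in nonmin p.2)].
  move=> cC c1 c2 vc; apply/exists_inP; exists (inord v.+1, c).
    by rewrite inE D1cl ?D2cl //= inordK.
  by rewrite /= inordK // ltnSn.
case/orP: (Cfull_total c1C c2C) => c12.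
  exact: common c1C (subxx _) c12 vc1.
exact: common c2C c12 (subxx _) vc2.
Qed.

Lemma phi_setI D1 D2 : is_down D1 -> is_down D2 -> phi (D1 :&: D2) = phi D1 :&: phi D2.
Proof.
move=> d1 d2; apply: bond_eq_of_nonmin.
- exact/NC_bond/phi_NC.
- exact/NC_bond/NC_setI/phi_NC/phi_NC.
- by rewrite subsetI !phi_mono ?subsetIl ?subsetIr.
rewrite (nonmin_phi (is_downI d1 d2)); apply: subset_trans (nonmin_downI d1 d2).
by rewrite -(nonmin_phi d1) -(nonmin_phi d2) subsetI !nonmin_mono ?subsetIl ?subsetIr.
Qed.

Definition phi_image : {set edges} := phi @: [set D | is_down D].

Lemma phi_imageP x : reflect (exists2 D, is_down D & x = phi D) (x \in phi_image).
Proof. by apply: (iffP imsetP) => -[D]; rewrite ?inE; exists D; rewrite ?inE. Qed.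

Lemma phi_image_meet D1 D2 z : is_down D1 -> is_down D2 ->
  is_meet (@incl n) (NC G) (phi D1) (phi D2) z -> z = phi (D1 :&: D2).
Proof.
move=> d1 d2 mz; rewrite phi_setI //.
exact: (is_meet_uniq (@incl_anti n) mz (NC_meet (phi_NC _) (phi_NC _))).
Qed.

Lemma phi_image_join D1 D2 z :
  is_join (@incl n) (NC G) (phi D1) (phi D2) z -> z = phi (D1 :|: D2).
Proof. by move=> jz; apply: (is_join_uniq (@incl_anti n) jz (phi_setU _ _)). Qed.

Lemma phi_image_closed : lat_closed (@incl n) (NC G) phi_image.
Proof.
move=> x y z /phi_imageP[D1 d1 ->] /phi_imageP[D2 d2 ->].
case=> [/(phi_image_meet d1 d2)-> | /phi_image_join->]; apply/phi_imageP.
  by exists (D1 :&: D2) => //; apply: is_downI.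
by exists (D1 :|: D2) => //; apply: is_downU.
Qed.

Lemma truncs_sub_phi_image : truncs \subset phi_image.
Proof.
apply/subsetP=> _ /imsetP[i _ ->]; apply/phi_imageP.
exists [set p : point | (p.1 <= i) && (p.2 \in Cfull)].
  apply/is_downP=> p; rewrite inE => /andP[pi pC]; split=> // q q1 qC _.
  by rewrite inE qC (leq_trans q1 pi).
apply/eqP; rewrite eqEsubset; apply/andP; split.
  have iG : ((i, G) : point) \in [set p : point | (p.1 <= i) && (p.2 \in Cfull)].
    by rewrite inE leqnn in_setU1 eqxx.
  by apply: subset_trans (gen_sub_phi iG); rewrite subsetI subxx trunc_subG.
apply: phi_least (trunc_NC i) _ => p; rewrite inE => /andP[pi _].
exact: subset_trans (subsetIl _ _) (trunc_mono _ pi).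
Qed.

Lemma chain_sub_phi_image : C \subset phi_image.
Proof.
apply/subsetP=> c cC; have cC' : c \in Cfull by rewrite in_setU1 cC orbT.
apply/phi_imageP; exists [set p : point | (p.2 \in Cfull) && (p.2 \subset c)].
  apply/is_downP=> p; rewrite inE => /andP[pC pc]; split=> // q _ qC qp.
  by rewrite inE qC (subset_trans qp pc).
apply/eqP; rewrite eqEsubset; apply/andP; split.
  have nc : ((ord_max, c) : point) \in [set p : point | (p.2 \in Cfull) && (p.2 \subset c)].
    by rewrite inE cC' subxx.
  apply: subset_trans (gen_sub_phi nc).
  by rewrite /gen /= trunc_full subsetI NC_subG ?subxx ?Cfull_NC.
apply: phi_least (Cfull_NC cC') _ => p; rewrite inE => /andP[_ pc].
exact: subset_trans (subsetIr _ _) pc.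
Qed.

Lemma chain_sublattice_distributive :
  distributive_on (@incl n) (NC G) (in_gen_sublattice (@incl n) (NC G) (truncs :|: C)).
Proof.
have gen_image x : in_gen_sublattice (@incl n) (NC G) (truncs :|: C) x -> x \in phi_image.
  case=> _; apply; last exact: phi_image_closed.
    by rewrite subUset truncs_sub_phi_image chain_sub_phi_image.
  by apply/subsetP=> _ /phi_imageP[D _ ->]; apply: phi_NC.
move=> x y z a b c d e /gen_image/phi_imageP[D1 d1 ->] /gen_image/phi_imageP[D2 d2 ->].
move=> /gen_image/phi_imageP[D3 d3 ->] /phi_image_join->.
move=> /(phi_image_meet d1 (is_downU d2 d3))-> /(phi_image_meet d1 d2)->.
move=> /(phi_image_meet d1 d3)-> /phi_image_join->.
by rewrite setIUr.
Qed.

End ChainSublattice.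

End NoncrossingBondLattice.

Theorem theorem5p11 (n : nat) (G : {set 'I_n * 'I_n}) :
  simple_graph G -> perfectly_labeled G -> crossing_closed G ->
  supersolvable_lattice (@incl n) (NC G).
Proof.
move=> Gs Gpl Gcc; split; first exact: NC_lattice.
exists (truncs G); split; first exact: truncs_maximal.
by move=> C chainC; apply: chain_sublattice_distributive.
Qed.
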